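(* Let $\sigma>0$, $\theta\ge0$, $\gamma\ge0$, $x>0$, and for each $N\in\mathbb N$ let $Z^{N,x}$ be the Markov jump process on $\{k/N:k\in\mathbb N_0\}$ started at $\lfloor Nx\rfloor/N$ which, from state $k/N$, jumps to $(k+1)/N$ at rate $kN\sigma^2/2+k\theta$ and to $(k-1)/N$ at rate $kN\sigma^2/2+k(k-1)\gamma/N$. Then for every $T>0$, $$\sup_{N\ge1}\sup_{0\le t\le T}\mathbb E\big[(Z^{N,x}_t)^4\big]<\infty.$$ *)

From HB Require Import structures.
From mathcomp Require Import all_boot all_order all_algebra.
From mathcomp Require Import all_classical all_reals all_analysis.
Set Implicit Arguments. Unset Strict Implicit. Unset Printing Implicit Defensive.
Import Order.TTheory GRing.Theory Num.Theory.
Local Open Scope classical_set_scope.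
Local Open Scope ring_scope.

(* The chain Z^N lives on {k/N : k in N_0}; we index states by k : nat. *)
Section BirthDeath.
Variables (R : realType) (sigma theta gamma : R) (N : nat).

Definition up_rate (k : nat) : R :=
  k%:R * N%:R * sigma ^+ 2 / 2 + k%:R * theta.
Definition down_rate (k : nat) : R :=
  k%:R * N%:R * sigma ^+ 2 / 2 + k%:R * (k.-1)%:R * gamma / N%:R.
Definition exit_rate (k : nat) : R := up_rate k + down_rate k.

Local Open Scope ereal_scope.

(* p_n(t)(i,j) = probability of going from i to j in time t with exactly
   n jumps (backward first-jump decomposition). *)
Fixpoint pjumps (n : nat) (t : R) (i j : nat) {struct n} : \bar R :=
  match n with
  | O => if i == j then (expR (- (exit_rate i * t)))%:E else 0
  | n'.+1 =>
      \int[lebesgue_measure]_(s in `[0%R, t]%classic)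
        ((expR (- (exit_rate i * s)))%:E *
           ((up_rate i)%:E * pjumps n' (t - s) i.+1 j
            + (down_rate i)%:E * pjumps n' (t - s) i.-1 j))
  end.

(* Transition function of the (minimal) Markov jump process with these rates:
   P_t(i,j) = sum over the number n of jumps. *)
Definition trans_prob (t : R) (i j : nat) : \bar R :=
  \sum_(n <oo) pjumps n t i j.

Definition fourth_moment (k0 : nat) (t : R) : \bar R :=
  \sum_(j <oo) trans_prob t k0 j * ((j%:R / N%:R) ^+ 4)%:E.

End BirthDeath.

Definition start_index (R : realType) (N : nat) (x : R) : nat :=
  Num.truncn (N%:R * x).

(* The function V k = 1 + (k / N) ^ 4 is a Lyapunov function for the chain,
   with a constant independent of N: writing z = k / N and d = 1 / N, the
   generator applied to z ^ 4 is a polynomial in z and d of degree 4 in z whose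
   coefficients are bounded by multiples of sigma ^ 2, theta and gamma (the
   quadratic death rate enters with a negative leading term), so the generator
   maps V to at most (exit rate + c) * V.  Splitting the transition function
   according to the time of the first jump, an induction on the number of jumps
   bounds E[V(Z_t)] over paths with at most n jumps by exp (c t) V(k0), and
   V(k0) <= 1 + x ^ 4. *)

From HB Require Import structures.
From mathcomp Require Import all_boot all_order all_algebra.
From mathcomp Require Import all_classical all_reals all_analysis.
From mathcomp Require Import measurable_realfun ring lra.
Set Implicit Arguments.
Unset Strict Implicit.
Unset Printing Implicit Defensive.
Import Order.TTheory GRing.Theory Num.Theory.
Local Open Scope classical_set_scope.
Local Open Scope ring_scope.

Lemma ereal_supD_le (R : realType) (A B : set (\bar R)) (z : \bar R) :
  A 0%E -> B 0%E -> (forall b, B b -> 0 <= b)%E ->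
  (forall a b, A a -> B b -> a + b <= z)%E ->
  (ereal_sup A + ereal_sup B <= z)%E.
Proof.
move=> A0 B0 B_ge0 ABz.
have z_ge0 : (0 <= z)%E by rewrite -[0%E]adde0; exact: ABz.
have [z_fin|] := boolP (z \is a fin_num); last first.
  by rewrite ge0_fin_numE// ltey => /negbNE/eqP ->; rewrite leey.
have le_fin y : (0 <= y)%E -> (y <= z)%E -> y \is a fin_num.
  by move=> y0 yz; rewrite ge0_fin_numE// (le_lt_trans yz)// -ge0_fin_numE.
have B_fin b : B b -> b \is a fin_num.
  by move=> Bb; apply: le_fin; [exact: B_ge0|rewrite -[b]add0e; exact: ABz].
have supA_le b : B b -> (ereal_sup A + b <= z)%E.
  move=> Bb; rewrite -leeBrDr ?B_fin//; apply: ge_ereal_sup => a Aa.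
  by rewrite leeBrDr ?B_fin//; exact: ABz.
have supA_fin : ereal_sup A \is a fin_num.
  by apply: le_fin; [exact: ereal_sup_ubound|rewrite -[ereal_sup A]adde0; exact: supA_le].
rewrite -leeBrDl//; apply: ge_ereal_sup => b Bb.
by rewrite leeBrDl//; exact: supA_le.
Qed.

(* The transition kernels are not known to be measurable in time, so these
   bounds avoid measurability: a nonnegative integral is the supremum of the
   integrals of the simple functions below the integrand. *)
Section ge0_integral_lower_bounds.
Local Open Scope ereal_scope.
Context d (T : measurableType d) (R : realType).
Variable mu : {measure set T -> \bar R}.
Implicit Types (D : set T) (f g : T -> \bar R).
Import HBNNSimple.

Let simple_below D f := [set sintegral mu h | h in
  [set h : {nnsfun T >-> R} | forall x, (h x)%:E <= (f \_ D) x]].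

Let simple_below0 D f : (forall x, D x -> 0 <= f x) -> simple_below D f 0.
Proof.
by move=> f0; exists nnsfun0; [move=> x; exact: erestrict_ge0|exact: sintegral0].
Qed.

Let simple_below_ge0 D f b : simple_below D f b -> 0 <= b.
Proof. by case=> h _ <-; exact: sintegral_ge0. Qed.

Lemma ge0_le_integral_nomeas D f g :
  (forall x, D x -> 0 <= f x) -> (forall x, D x -> f x <= g x) ->
  \int[mu]_(x in D) f x <= \int[mu]_(x in D) g x.
Proof.
move=> f0 fg.
have g0 x : D x -> 0 <= g x by move=> Dx; exact: le_trans (f0 _ Dx) (fg _ Dx).
rewrite (ge0_integralE mu f0) (ge0_integralE mu g0).
apply: ereal_sup_le => _ [h hf <-]; exists h => // x.
exact: le_trans (hf x) (lee_restrict fg x).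
Qed.

Lemma ge0_integralD_le D f g :
  (forall x, D x -> 0 <= f x) -> (forall x, D x -> 0 <= g x) ->
  \int[mu]_(x in D) f x + \int[mu]_(x in D) g x <= \int[mu]_(x in D) (f x + g x).
Proof.
move=> f0 g0.
have fg0 x : D x -> 0 <= f x + g x by move=> Dx; rewrite adde_ge0 ?f0 ?g0.
rewrite (ge0_integralE mu f0) (ge0_integralE mu g0).
apply: ereal_supD_le; [exact: simple_below0|exact: simple_below0|exact: simple_below_ge0|].
move=> _ _ [h1 h1f <-] [h2 h2g <-].
rewrite (ge0_integralE mu fg0) -sintegralD.
apply: ereal_sup_ubound; exists (add_nnsfun h1 h2) => // x /=.
rewrite EFinD /patch; have := h1f x; have := h2g x; rewrite /patch.
by case: ifP => _ h2x h1x; apply: le_trans (leeD h1x h2x) _; rewrite ?adde0.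
Qed.

Lemma ge0_integralZl_le D f (k : R) : (0 <= k)%R ->
  (forall x, D x -> 0 <= f x) ->
  k%:E * \int[mu]_(x in D) f x <= \int[mu]_(x in D) (k%:E * f x).
Proof.
move=> k0 f0.
have kf0 x : D x -> 0 <= k%:E * f x by move=> Dx; rewrite mule_ge0 ?f0.
rewrite (ge0_integralE mu f0) (ge0_integralE mu kf0) -ereal_supZl//; last first.
  by apply/set0P; exists 0; exact: simple_below0.
apply: ereal_sup_le => _ [_ [h hf <-] <-]; exists (scale_nnsfun h k0).
  by move=> x /=; rewrite erestrict_scale EFinM; exact: lee_wpmul2l.
by rewrite /= sintegralrM.
Qed.

Lemma ge0_integral_sum_le (I : Type) (s : seq I) D (f : I -> T -> \bar R) :
  (forall i x, D x -> 0 <= f i x) ->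
  \sum_(i <- s) \int[mu]_(x in D) f i x <= \int[mu]_(x in D) \sum_(i <- s) f i x.
Proof.
move=> f0; elim: s => [|i s IH].
  by rewrite big_nil; under eq_integral do rewrite big_nil; rewrite integral0.
rewrite big_cons; under [X in _ <= X]eq_integral do rewrite big_cons.
apply: (@le_trans _ _
  (\int[mu]_(x in D) f i x + \int[mu]_(x in D) \sum_(j <- s) f j x)).
  exact: leeD2l.
apply: ge0_integralD_le => x Dx; first exact: f0.
by rewrite sume_ge0// => j _; exact: f0.
Qed.

End ge0_integral_lower_bounds.

Lemma integral_itv0c_expR (R : realType) (b k t : R) :
  0 <= b -> 0 <= k -> 0 <= t ->
  (\int[lebesgue_measure]_(s in `[0%R, t]) (k * (b * expR (- b * s)))%:E
   = (k * (1 - expR (- b * t)))%:E)%E.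
Proof.
move=> b0 k0; rewrite le_eqVlt => /predU1P[<-|t_gt0].
  by rewrite set_itv1 integral_set1 mulr0 expR0 subrr mulr0.
transitivity (\int[lebesgue_measure]_(s in `[0%R, t])
    (k%:E * (exponential_pdf b s)%:E))%E.
  apply: eq_integral => s; rewrite inE /= in_itv /= => /andP[s0 _].
  by rewrite exponential_pdfE.
rewrite ge0_integralZl_EFin//.
- have := exponential_prob_itv0c b t_gt0; rewrite /exponential_prob => ->.
  by rewrite -EFinM.
- by move=> s _; rewrite lee_fin exponential_pdf_ge0.
- have : measurable_fun [set: R] (EFin \o (exponential_pdf b : R -> R)).
    by apply: measurableT_comp => //; exact: measurable_exponential_pdf.
  exact: measurable_funTS.
Qed.

(* [quartic_drift sigma theta gamma (k / N) (1 / N)] is the generator of the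
   chain applied to [j |-> (j / N) ^ 4] at the state [k]. *)
Definition quartic_drift (R : realType) (sigma theta gamma z d : R) : R :=
  sigma ^+ 2 * z * (6 * z ^+ 2 + d ^+ 2)
  + theta * z * (4 * z ^+ 3 + 6 * z ^+ 2 * d + 4 * z * d ^+ 2 + d ^+ 3)
  + gamma * z * (z - d) * (- 4 * z ^+ 3 + 6 * z ^+ 2 * d - 4 * z * d ^+ 2 + d ^+ 3).

(* 15 = 4 + 6 + 4 + 1 bounds the binomial coefficients of [(z + d) ^ 4 - z ^ 4]. *)
Definition drift_const (R : realType) (sigma theta gamma : R) : R :=
  15 * (theta + sigma ^+ 2 + gamma).

Lemma drift_const_ge0 (R : realType) (sigma theta gamma : R) :
  0 <= theta -> 0 <= gamma -> 0 <= drift_const sigma theta gamma.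
Proof. by move=> t0 g0; rewrite mulr_ge0 ?addr_ge0 ?sqr_ge0. Qed.

Lemma quartic_drift_le (R : realType) (sigma theta gamma z d : R) :
  0 <= theta -> 0 <= gamma -> 0 < d -> d <= 1 -> d <= z ->
  quartic_drift sigma theta gamma z d
    <= drift_const sigma theta gamma * (1 + z ^+ 4).
Proof.
move=> t0 g0 d0 d1 dz; have s0 := sqr_ge0 sigma.
have z0 : 0 <= z by lra.
have z2_le : z ^+ 2 <= 1 + z ^+ 4 by have := sqr_ge0 (z ^+ 2 - 1); nra.
have z1_le : z <= 1 + z ^+ 4 by have := sqr_ge0 (z - 1); nra.
have z3_le : z ^+ 3 <= 1 + z ^+ 4.
  by have := mulr_ge0 (sqr_ge0 z) (sqr_ge0 (z - 1)); nra.
have d2_le : d ^+ 2 <= 1 by nra.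
have d3_le : d ^+ 3 <= 1 by rewrite exprS; nra.
have zd2_le : z * d ^+ 2 <= z by nra.
have z2d_le : z ^+ 2 * d <= z ^+ 2 by have := sqr_ge0 z; nra.
have zzd_ge0 : 0 <= z * (z - d) by apply: mulr_ge0; lra.
have zzd_le : z * (z - d) <= z ^+ 2 by rewrite expr2; nra.
have sigma_le : sigma ^+ 2 * z * (6 * z ^+ 2 + d ^+ 2)
    <= sigma ^+ 2 * (7 * (1 + z ^+ 4)).
  by rewrite -mulrA ler_wpM2l //; nra.
have theta_le : theta * z * (4 * z ^+ 3 + 6 * z ^+ 2 * d + 4 * z * d ^+ 2 + d ^+ 3)
    <= theta * (15 * (1 + z ^+ 4)).
  by rewrite -mulrA ler_wpM2l //; nra.
have gamma_le : gamma * z * (z - d) *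
    (- 4 * z ^+ 3 + 6 * z ^+ 2 * d - 4 * z * d ^+ 2 + d ^+ 3)
    <= gamma * (7 * (1 + z ^+ 4)).
  rewrite -!mulrA ler_wpM2l // mulrA.
  have : - 4 * z ^+ 3 + 6 * z ^+ 2 * d - 4 * z * d ^+ 2 + d ^+ 3
      <= 6 * z ^+ 2 + 1 by nra.
  nra.
rewrite /quartic_drift /drift_const; nra.
Qed.

Lemma sume_delta_le (R : realType) (J i : nat) (X : nat -> \bar R) : (0 <= X i)%E ->
  (\sum_(0 <= j < J) (if i == j then X j else 0) <= X i)%E.
Proof.
move=> X0; elim: J => [|J IH]; first by rewrite big_geq.
rewrite big_nat_recr //=; case: eqP => [<-|_]; last by rewrite adde0.
rewrite big1_seq ?add0e // => j; rewrite mem_iota add0n subn0 => /andP[_ ji].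
by case: eqP => // ij; move: ji; rewrite -ij ltnn.
Qed.

Lemma ge0_sume2_linear (R : realType) (n J : nat) (e a b : R)
    (P Q : nat -> nat -> \bar R) (w : nat -> \bar R) :
  0 <= e -> 0 <= a -> 0 <= b -> (forall j, 0 <= w j)%E ->
  (forall m j, 0 <= P m j)%E -> (forall m j, 0 <= Q m j)%E ->
  (\sum_(0 <= m < n) \sum_(0 <= j < J) (e%:E * (a%:E * P m j + b%:E * Q m j) * w j) =
   e%:E * (a%:E * \sum_(0 <= m < n) \sum_(0 <= j < J) (P m j * w j)
         + b%:E * \sum_(0 <= m < n) \sum_(0 <= j < J) (Q m j * w j)))%E.
Proof.
move=> e0 a0 b0 w0 P0 Q0.
have Pw0 m j : (0 <= P m j * w j)%E by rewrite mule_ge0.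
have Qw0 m j : (0 <= Q m j * w j)%E by rewrite mule_ge0.
have termE m j : (e%:E * (a%:E * P m j + b%:E * Q m j) * w j =
    (e * a)%:E * (P m j * w j) + (e * b)%:E * (Q m j * w j))%E.
  rewrite ge0_muleDr ?mule_ge0 ?lee_fin // ge0_muleDl ?mule_ge0 ?lee_fin //.
  by rewrite !EFinM !muleA.
under eq_bigr do under eq_bigr do rewrite termE.
under eq_bigr do rewrite big_split /=.
rewrite big_split /= ge0_muleDr ?mule_ge0 ?lee_fin ?sume_ge0 //; last 2 first.
- by move=> m _; rewrite sume_ge0.
- by move=> m _; rewrite sume_ge0.
rewrite !muleA -!EFinM !ge0_sume_distrr => [|m _|m _]; try by rewrite sume_ge0.
by congr (_ + _); apply: eq_bigr => m _; rewrite ge0_sume_distrr.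
Qed.

Lemma nneseries_le (R : realType) (u : nat -> \bar R) (M : \bar R) :
  (forall n, 0 <= u n)%E -> (forall K, \sum_(0 <= k < K) u k <= M)%E ->
  (\sum_(k <oo) u k <= M)%E.
Proof.
move=> u0 uM; apply: lime_le; first exact: is_cvg_nneseries.
exact: nearW.
Qed.

Definition lyapunov (R : realType) (N k : nat) : R := 1 + (k%:R / N%:R) ^+ 4.

Lemma lyapunov_ge0 (R : realType) (N k : nat) : 0 <= lyapunov R N k.
Proof. by rewrite addr_ge0 ?exprn_ge0 ?divr_ge0. Qed.

Lemma lyapunov_start_index_le (R : realType) (N : nat) (x : R) : 0 <= x ->
  lyapunov R N (start_index N x) <= 1 + x ^+ 4.
Proof.
move=> x0; rewrite lerD2l; have [->|N_gt0] := posnP N.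
  by rewrite invr0 mulr0 expr0n exprn_ge0.
apply: lerXn2r; rewrite ?nnegrE ?divr_ge0 //.
rewrite ler_pdivrMr ?ltr0n // mulrC.
by rewrite truncn_le mulr_ge0 ?ler0n.
Qed.

Section birth_death_moments.
Variables (R : realType) (sigma theta gamma : R) (N : nat).
Hypotheses (theta_ge0 : 0 <= theta) (gamma_ge0 : 0 <= gamma) (N_gt0 : (0 < N)%N).

Local Notation up := (up_rate sigma theta N).
Local Notation down := (down_rate sigma gamma N).
Local Notation exit := (exit_rate sigma theta gamma N).
Local Notation pjumps := (pjumps sigma theta gamma N).
Local Notation V := (lyapunov R N).
Local Notation c := (drift_const sigma theta gamma).
Local Notation quartic j := (((j%:R / N%:R) ^+ 4)%:E : \bar R).

Lemma up_rate_ge0 k : 0 <= up k.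
Proof.
rewrite /up_rate; move: (sigma ^+ 2) (sqr_ge0 sigma) => s2 s2_ge0.
by rewrite addr_ge0 ?mulr_ge0 ?invr_ge0 ?ler0n.
Qed.

Lemma down_rate_ge0 k : 0 <= down k.
Proof.
rewrite /down_rate; move: (sigma ^+ 2) (sqr_ge0 sigma) => s2 s2_ge0.
by rewrite addr_ge0 ?mulr_ge0 ?invr_ge0 ?ler0n.
Qed.

Lemma exit_rate_ge0 k : 0 <= exit k.
Proof. by rewrite /exit_rate addr_ge0 ?up_rate_ge0 ?down_rate_ge0. Qed.

Lemma first_jump_weight_ge0 i s (u v : \bar R) : (0 <= u)%E -> (0 <= v)%E ->
  (0 <= (expR (- (exit i * s)))%:E * ((up i)%:E * u + (down i)%:E * v))%E.
Proof.
move=> u0 v0; rewrite mule_ge0 ?lee_fin ?expR_ge0 // adde_ge0 // mule_ge0 //.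
  by rewrite lee_fin up_rate_ge0.
by rewrite lee_fin down_rate_ge0.
Qed.

Lemma pjumps_ge0 n t i j : (0 <= pjumps n t i j)%E.
Proof.
elim: n t i j => [|n IH] t i j /=.
  by case: eqP => _ //; rewrite lee_fin expR_ge0.
by apply: integral_ge0 => s _; exact: first_jump_weight_ge0.
Qed.

Lemma generator_lyapunov k :
  up k.+1 * V k.+2 + down k.+1 * V k - exit k.+1 * V k.+1
  = quartic_drift sigma theta gamma (k.+1%:R / N%:R) (1 / N%:R).
Proof.
have N_neq0 : N%:R != 0 :> R by rewrite pnatr_eq0 -lt0n.
rewrite /exit_rate /up_rate /down_rate /lyapunov /quartic_drift /= -!natr1.
by field.
Qed.

Lemma lyapunov_drift k : up k * V k.+1 + down k * V k.-1 <= (exit k + c) * V k.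
Proof.
have c_ge0 := drift_const_ge0 sigma theta_ge0 gamma_ge0.
case: k => [|k].
  rewrite /exit_rate /up_rate /down_rate mulr0n !mul0r !addr0 mul0r add0r.
  by rewrite mul0r add0r mulr_ge0 ?lyapunov_ge0.
have := generator_lyapunov k; rewrite succnK.
suff : quartic_drift sigma theta gamma (k.+1%:R / N%:R) (1 / N%:R) <= c * V k.+1.
  by lra.
have N_ge1 : 1 <= N%:R :> R by rewrite ler1n.
apply: quartic_drift_le => //.
- by rewrite divr_gt0 ?ltr0n.
- by rewrite ler_pdivrMr ?ltr0n // mul1r.
- by rewrite ler_pM2r ?invr_gt0 ?ltr0n // ler1n.
Qed.

Lemma quartic_ge0 j : (0 <= quartic j)%E.
Proof. by rewrite lee_fin exprn_ge0 // divr_ge0. Qed.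

Definition partial_moment n J t i : \bar R :=
  \sum_(0 <= m < n) \sum_(0 <= j < J) (pjumps m t i j * quartic j).

Lemma partial_moment_ge0 n J t i : (0 <= partial_moment n J t i)%E.
Proof.
rewrite sume_ge0 // => m _; rewrite sume_ge0 // => j _.
by rewrite mule_ge0 ?pjumps_ge0 ?quartic_ge0.
Qed.

Lemma no_jump_moment_le J t i :
  (\sum_(0 <= j < J) (pjumps 0 t i j * quartic j)
    <= (expR (- (exit i * t)) * V i)%:E)%E.
Proof.
pose X j := ((expR (- (exit i * t)))%:E * quartic j)%E.
rewrite /= (eq_bigr (fun j => if i == j then X j else 0%E)); last first.
  by move=> j _; case: eqP => _; rewrite ?mul0e.
apply: le_trans (@sume_delta_le _ J i X _) _.
  by rewrite mule_ge0 ?lee_fin ?expR_ge0 ?quartic_ge0.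
by rewrite /X -EFinM lee_fin ler_wpM2l ?expR_ge0 // lerDr.
Qed.

Lemma partial_moment_first_jump n J t i :
  (partial_moment n.+1 J t i <= (expR (- (exit i * t)) * V i)%:E +
    \int[lebesgue_measure]_(s in `[0%R, t]) ((expR (- (exit i * s)))%:E *
       ((up i)%:E * partial_moment n J (t - s) i.+1
        + (down i)%:E * partial_moment n J (t - s) i.-1)))%E.
Proof.
rewrite /partial_moment big_nat_recl //; apply: leeD; first exact: no_jump_moment_le.
pose G m j s := ((expR (- (exit i * s)))%:E *
   ((up i)%:E * pjumps m (t - s) i.+1 j + (down i)%:E * pjumps m (t - s) i.-1 j))%E.
have G_ge0 m j s : (0 <= G m j s)%E by rewrite first_jump_weight_ge0 ?pjumps_ge0.
rewrite [X in (_ <= X)%E](_ : _ = \int[lebesgue_measure]_(s in `[0%R, t])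
    \sum_(0 <= m < n) \sum_(0 <= j < J) (G m j s * quartic j))%E; last first.
  apply: eq_integral => s _.
  by rewrite ge0_sume2_linear ?expR_ge0 ?up_rate_ge0 ?down_rate_ge0 // => m j;
    exact: pjumps_ge0.
apply: (@le_trans _ _ (\sum_(0 <= m < n) \int[lebesgue_measure]_(s in `[0%R, t])
    \sum_(0 <= j < J) (G m j s * quartic j))%E); last first.
  apply: ge0_integral_sum_le => m s _.
  by rewrite sume_ge0 // => j _; rewrite mule_ge0 ?quartic_ge0.
apply: lee_sum => m _.
apply: (@le_trans _ _ (\sum_(0 <= j < J)
    \int[lebesgue_measure]_(s in `[0%R, t]) (G m j s * quartic j))%E); last first.
  by apply: ge0_integral_sum_le => j s _; rewrite mule_ge0 ?quartic_ge0.
apply: lee_sum => j _.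
rewrite muleC; under [X in (_ <= X)%E]eq_integral do rewrite muleC.
apply: ge0_integralZl_le => [|s _]; last exact: G_ge0.
by rewrite exprn_ge0 // divr_ge0.
Qed.

Lemma first_jump_integrand_le n J t i s :
  (forall t' k, 0 <= t' -> (partial_moment n J t' k <= (expR (c * t') * V k)%:E)%E) ->
  0 <= s <= t ->
  ((expR (- (exit i * s)))%:E *
     ((up i)%:E * partial_moment n J (t - s) i.+1
      + (down i)%:E * partial_moment n J (t - s) i.-1)
   <= (expR (c * t) * V i * ((exit i + c) * expR (- (exit i + c) * s)))%:E)%E.
Proof.
move=> IH /andP[_ s_le_t]; set q := exit i.
have ts_ge0 : 0 <= t - s by rewrite subr_ge0.
apply: (@le_trans _ _ ((expR (- (q * s)))%:E *
    ((up i)%:E * (expR (c * (t - s)) * V i.+1)%:E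
     + (down i)%:E * (expR (c * (t - s)) * V i.-1)%:E))%E).
  rewrite lee_wpmul2l ?lee_fin ?expR_ge0 // leeD // lee_wpmul2l ?IH //.
  - by rewrite lee_fin up_rate_ge0.
  - by rewrite lee_fin down_rate_ge0.
rewrite -!EFinM lee_fin.
have expE : expR (- (q * s)) * expR (c * (t - s)) = expR (c * t) * expR (- (q + c) * s).
  by rewrite -!expRD; congr expR; ring.
rewrite (_ : _ * (_ + _) = expR (- (q * s)) * expR (c * (t - s)) *
   (up i * V i.+1 + down i * V i.-1)); last by ring.
rewrite expE (_ : _ * (_ * _) = expR (c * t) * expR (- (q + c) * s) * ((q + c) * V i));
  last by ring.
by rewrite ler_wpM2l ?mulr_ge0 ?expR_ge0 // lyapunov_drift.
Qed.

Lemma partial_moment_le n J t i : 0 <= t ->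
  (partial_moment n J t i <= (expR (c * t) * V i)%:E)%E.
Proof.
have c_ge0 := drift_const_ge0 sigma theta_ge0 gamma_ge0.
elim: n t i => [|n IH] t i t_ge0.
  by rewrite /partial_moment big_geq // lee_fin mulr_ge0 ?expR_ge0 ?lyapunov_ge0.
apply: le_trans (partial_moment_first_jump n J t i) _.
apply: le_trans (leeD (lexx _) _) _.
  apply: ge0_le_integral_nomeas => [s _|s]; last first.
    by rewrite /= in_itv /=; exact: first_jump_integrand_le.
  by rewrite first_jump_weight_ge0 ?partial_moment_ge0.
set q := exit i; have q_ge0 : 0 <= q := exit_rate_ge0 i.
have EV_ge0 : 0 <= expR (c * t) * V i by rewrite mulr_ge0 ?expR_ge0 ?lyapunov_ge0.
rewrite integral_itv0c_expR ?(addr_ge0 q_ge0 c_ge0) // -EFinD lee_fin.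
have -> : expR (- (q * t)) = expR (c * t) * expR (- (q + c) * t).
  by rewrite -expRD; congr expR; ring.
lra.
Qed.

Lemma fourth_moment_le k t : 0 <= t ->
  (fourth_moment sigma theta gamma N k t <= (expR (c * t) * V k)%:E)%E.
Proof.
move=> t_ge0; apply: nneseries_le => [j|J].
  rewrite mule_ge0 ?quartic_ge0 // nneseries_ge0 // => n _ _; exact: pjumps_ge0.
apply: (@le_trans _ _ (\sum_(0 <= n <oo) \sum_(0 <= j < J)
    (pjumps n t k j * quartic j))%E).
  rewrite nneseries_sum_nat => [|n j]; last by rewrite mule_ge0 ?quartic_ge0 ?pjumps_ge0.
  apply: lee_sum => j _.
  rewrite muleC -nneseriesZl => [|n _]; last exact: pjumps_ge0.
  apply: lee_nneseries => [n _ _|n _]; last by rewrite muleC.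
  by rewrite mule_ge0 ?quartic_ge0 ?pjumps_ge0.
apply: nneseries_le => [n|n]; last exact: partial_moment_le.
by rewrite sume_ge0 // => j _; rewrite mule_ge0 ?quartic_ge0 ?pjumps_ge0.
Qed.

End birth_death_moments.

Theorem lemma5 (R : realType) (sigma theta gamma x : R)
  (hsigma : 0 < sigma) (htheta : 0 <= theta) (hgamma : 0 <= gamma)
  (hx : 0 < x) (T : R) (hT : 0 < T) :
  exists M : R, forall N : nat, (1 <= N)%N -> forall t : R, 0 <= t -> t <= T ->
    (fourth_moment sigma theta gamma N (start_index N x) t <= M%:E)%E.
Proof.
set c := drift_const sigma theta gamma.
exists (expR (c * T) * (1 + x ^+ 4)) => N N_ge1 t t_ge0 t_le_T.
apply: le_trans (fourth_moment_le sigma htheta hgamma N_ge1 _ t_ge0) _.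
rewrite lee_fin ler_pM ?expR_ge0 ?lyapunov_ge0 //.
  by rewrite ler_expR ler_wpM2l ?drift_const_ge0.
by apply: lyapunov_start_index_le; exact: ltW.
Qed.
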